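(* Let $G$ be a group and $K$ a subgroup of $G$. The set $\mathrm{GCA}_K(A^G):=\{\mathcal{T}\in\mathrm{GCA}(A^G):\text{the minimal memory set of }\mathcal{T}\text{ is contained in }K\}$ is a submonoid of $\mathrm{GCA}(A^G)$ (under composition) if and only if $K$ is fully invariant, i.e. $\phi(K)\subseteq K$ for all $\phi\in\mathrm{End}(G)$.
   Context: $A$ is a finite set with $|A|\ge 2$. $A^G$ is the set of functions $G\to A$ with shift action $(g\cdot x)(k):=x(g^{-1}k)$. For $\phi\in\mathrm{End}(G)$, a $\phi$-cellular automaton is a map $\mathcal{T}:A^G\to A^G$ for which there exist a finite $T\subseteq G$ (memory set) and $\mu:A^T\to A$ with $\mathcal{T}(x)(h)=\mu((\phi(h^{-1})\cdot x)|_T)$ for all $x,h$. $\mathrm{GCA}(A^G)$ is the set of all $\phi$-cellular automata $A^G\to A^G$ over all $\phi\in\mathrm{End}(G)$; it is a monoid under composition (a composite of a $\phi$-CA with memory set $T$ after a $\psi$-CA with memory set $S$ is a $(\psi\circ\phi)$-CA with memory set $\psi(T)S$). The minimal memory set of $\mathcal{T}$ is the intersection of all its memory sets, which is itself a memory set. *)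

From Stdlib Require List.

From mathcomp Require Import all_boot.



Record group_on (G : Type) := GroupOn {
  gmul : G -> G -> G;
  gone : G;
  ginv : G -> G;
  gmulA : forall a b c, gmul a (gmul b c) = gmul (gmul a b) c;
  gmul1g : forall a, gmul gone a = a;
  gmulg1 : forall a, gmul a gone = a;
  gmulVg : forall a, gmul (ginv a) a = gone;
  gmulgV : forall a, gmul a (ginv a) = gone
}.

Section Defs.
Variables (G : Type) (grp : group_on G) (A : finType).

Local Notation "a * b" := (@gmul G grp a b).

Definition is_subgroup (K : G -> Prop) : Prop :=
  K (@gone G grp) /\ (forall a b, K a -> K b -> K (a * b)) /\
  (forall a, K a -> K (@ginv G grp a)).

Definition is_endo (phi : G -> G) : Prop :=
  forall a b, phi (a * b) = phi a * phi b.

Definition shift (g : G) (x : G -> A) : G -> A :=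
  fun k => x (@ginv G grp g * k).

Definition finite_set (S : G -> Prop) : Prop :=
  exists l : list G, forall g, S g -> List.In g l.

Definition restr (S : G -> Prop) (x : G -> A) : {g : G | S g} -> A :=
  fun s => x (proj1_sig s).

Definition phi_memory_set (phi : G -> G) (T : (G -> A) -> (G -> A))
    (S : G -> Prop) : Prop :=
  finite_set S /\
  exists mu : ({g : G | S g} -> A) -> A,
    forall x h, T x h = mu (restr S (shift (phi (@ginv G grp h)) x)).

Definition is_phiCA (phi : G -> G) (T : (G -> A) -> (G -> A)) : Prop :=
  exists S, phi_memory_set phi T S.

Definition is_GCA (T : (G -> A) -> (G -> A)) : Prop :=
  exists phi, is_endo phi /\ is_phiCA phi T.

Definition memory_set (T : (G -> A) -> (G -> A)) (S : G -> Prop) : Prop :=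
  exists phi, is_endo phi /\ phi_memory_set phi T S.

Definition min_memory_set (T : (G -> A) -> (G -> A)) : G -> Prop :=
  fun g => forall S, memory_set T S -> S g.

Definition GCA_K (K : G -> Prop) (T : (G -> A) -> (G -> A)) : Prop :=
  is_GCA T /\ (forall g, min_memory_set T g -> K g).

Definition is_GCA_submonoid (P : ((G -> A) -> (G -> A)) -> Prop) : Prop :=
  (forall T, P T -> is_GCA T) /\
  P (fun x => x) /\
  (forall T1 T2, P T1 -> P T2 -> P (fun x => T1 (T2 x))).

Definition fully_invariant (K : G -> Prop) : Prop :=
  forall phi, is_endo phi -> forall k, K k -> K (phi k).

End Defs.

From mathcomp Require Import all_boot.
From Stdlib Require Import ClassicalEpsilon FunctionalExtensionality List.

(* Everything rests on a coordinate-free description of memory sets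
   (phi_memory_setP): S is a memory set of T as a phi-cellular automaton iff
   S is finite, T is phi-equivariant (T x h = T (phi(h^-1) . x) 1) and the
   value T x 1 only depends on x restricted to S.  From it follow:
   - memory sets of T for two endomorphisms can be intersected, so when the
     minimal memory set lies in K there is a genuine memory set inside K;
   - the composite of a phi-CA with memory set S1 after a psi-CA with memory
     set S2 has memory set psi(S1) S2.
   Sufficiency follows from these two facts.  For necessity, given phi and
   k in K, the pullback x |-> x o phi and the translation x |-> x(_ * k) lie
   in GCA_K(A^G), while their composite x |-> x(phi(_ * k)) reads the
   coordinate phi k at the identity, which forces phi k into its minimal
   memory set (here |A| >= 2 is used). *)

#[local] Arguments gmul {G} g _ _.
#[local] Arguments gone {G} g.
#[local] Arguments ginv {G} g _.
#[local] Arguments gmulA {G} g a b c.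
#[local] Arguments gmul1g {G} g a.
#[local] Arguments gmulg1 {G} g a.
#[local] Arguments gmulVg {G} g a.
#[local] Arguments gmulgV {G} g a.
#[local] Arguments is_endo {G} grp phi.
#[local] Arguments shift {G} grp {A} g x _.
#[local] Arguments finite_set {G} S.
#[local] Arguments phi_memory_set {G} grp {A} phi T S.
#[local] Arguments memory_set {G} grp {A} T S.
#[local] Arguments min_memory_set {G} grp {A} T _.
#[local] Arguments is_GCA {G} grp {A} T.
#[local] Arguments GCA_K {G} grp {A} K T.

Section GroupFacts.
Context {G : Type} {grp : group_on G}.

Local Notation "a * b" := (gmul grp a b).
Local Notation one := (gone grp).
Local Notation inv := (ginv grp).

Lemma inv_unique (a b : G) : a * b = one -> b = inv a.
Proof.
by move=> ab1; rewrite -(gmul1g grp b) -(gmulVg grp a) -gmulA ab1 gmulg1.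
Qed.

Lemma invK (a : G) : inv (inv a) = a.
Proof. by symmetry; apply: inv_unique; rewrite gmulVg. Qed.

Lemma inv1 : inv one = one.
Proof. by symmetry; apply: inv_unique; rewrite gmul1g. Qed.

Lemma invM (a b : G) : inv (a * b) = inv b * inv a.
Proof.
symmetry; apply: inv_unique.
by rewrite gmulA -(gmulA grp a) gmulgV gmulg1 gmulgV.
Qed.

Section Endomorphisms.
Context {phi : G -> G}.
Hypothesis phiM : is_endo grp phi.

(* Endomorphisms preserve the unit (phi 1 is an idempotent, hence 1). *)
Lemma endo1 : phi one = one.
Proof.
have idem : phi one * phi one = phi one by rewrite -phiM gmul1g.
have -> : phi one = inv (phi one) * (phi one * phi one).
  by rewrite gmulA gmulVg gmul1g.
by rewrite idem gmulVg.
Qed.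

Lemma endoV (a : G) : phi (inv a) = inv (phi a).
Proof. by apply: inv_unique; rewrite -phiM gmulgV endo1. Qed.

End Endomorphisms.

Lemma endo_comp {phi psi : G -> G} :
  is_endo grp phi -> is_endo grp psi -> is_endo grp (fun g => psi (phi g)).
Proof. by move=> phiM psiM a b; rewrite phiM psiM. Qed.

Lemma endo_id : is_endo grp (fun g => g).
Proof. by move=> a b. Qed.

End GroupFacts.

Section MemorySets.
Context {G : Type} {grp : group_on G} {A : finType}.

Local Notation "a * b" := (gmul grp a b).
Local Notation one := (gone grp).
Local Notation inv := (ginv grp).
Local Notation config := (G -> A).
Local Notation shift := (shift grp).

Lemma shift1 (x : config) : shift one x = x.
Proof.
by apply: functional_extensionality => k; rewrite /shift inv1 gmul1g.
Qed.

Lemma shiftM a b (x : config) : shift a (shift b x) = shift (a * b) x.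
Proof. by apply: functional_extensionality => k; rewrite /shift invM gmulA. Qed.

Definition equivariant (phi : G -> G) (T : config -> config) : Prop :=
  forall x h, T x h = T (shift (phi (inv h)) x) one.

Definition local_at_one (S : G -> Prop) (T : config -> config) : Prop :=
  forall x y, (forall s, S s -> x s = y s) -> T x one = T y one.

(* Coordinate-free description of the memory sets of a phi-CA; the letter a0
   pads configurations defined on S only, to build the local rule. *)
Lemma phi_memory_setP (a0 : A) {phi} {T : config -> config} {S} :
  is_endo grp phi ->
  phi_memory_set grp phi T S <->
  [/\ finite_set S, equivariant phi T & local_at_one S T].
Proof.
move=> phiM; split.
  case=> finS [mu Tmu]; split=> // [x h | x y xy].
    by rewrite !Tmu inv1 endo1 // shift1.
  rewrite !Tmu inv1 endo1 // !shift1; congr mu.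
  by apply: functional_extensionality => -[s Ss]; apply: xy.
case=> finS Teq Tloc; split=> //.
pose extend (f : {g | S g} -> A) (g : G) :=
  match excluded_middle_informative (S g) with
  | left Sg => f (exist _ g Sg) | right _ => a0 end.
exists (fun f => T (extend f) one) => x h.
rewrite Teq; apply: Tloc => s Ss; rewrite /extend.
by case: excluded_middle_informative.
Qed.

Lemma memory_setI (a0 : A) {phi chi} {T : config -> config} {S S'} :
  is_endo grp phi -> phi_memory_set grp phi T S ->
  is_endo grp chi -> phi_memory_set grp chi T S' ->
  phi_memory_set grp phi T (fun g => S g /\ S' g).
Proof.
move=> phiM /(phi_memory_setP a0 phiM) [[l finS] Teq Tloc].
move=> chiM /(phi_memory_setP a0 chiM) [_ _ Tloc'].
apply/(phi_memory_setP a0 phiM); split=> //.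
  by exists l => g [/finS].
move=> x y xy.
pose z g := if excluded_middle_informative (S g) then x g else y g.
have -> : T x one = T z one.
  by apply: Tloc => s Ss; rewrite /z; case: excluded_middle_informative.
apply: Tloc' => s S's; rewrite /z.
by case: excluded_middle_informative => // Ss; apply: xy.
Qed.

Lemma memory_set_avoid (a0 : A) {phi} {T : config -> config} {S g} :
  is_endo grp phi -> phi_memory_set grp phi T S -> ~ min_memory_set grp T g ->
  exists S', [/\ phi_memory_set grp phi T S', forall h, S' h -> S h & ~ S' g].
Proof.
move=> phiM TS not_min.
have [S0 [[chi [chiM TS0]] not_S0g]] : exists S0, memory_set grp T S0 /\ ~ S0 g.
  apply: NNPP => none; apply: not_min => S0 TS0.
  by apply: NNPP => not_S0g; apply: none; exists S0.
exists (fun h => S h /\ S0 h); split=> [||[]] //.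
- exact: (memory_setI a0 phiM TS chiM TS0).
- by move=> h [].
Qed.

(* If the minimal memory set lies in K, some actual memory set lies in K:
   remove one by one the points of a finite memory set that are not in K. *)
Lemma memory_set_within (a0 : A) {K : G -> Prop} {T : config -> config} :
  is_GCA grp T -> (forall g, min_memory_set grp T g -> K g) ->
  exists phi S, [/\ is_endo grp phi, phi_memory_set grp phi T S
                  & forall g, S g -> K g].
Proof.
case=> phi [phiM [S TS]] minK; exists phi.
have shrink l : exists S', [/\ phi_memory_set grp phi T S',
    forall g, S' g -> S g & forall g, In g l -> S' g -> K g].
  elim: l => [|a l [S' [TS' S'S S'K]]]; first by exists S.
  case: (classic (K a)) => [Ka | not_Ka].
    by exists S'; split=> // g [<- | /S'K].
  have not_min : ~ min_memory_set grp T a by move/minK.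
  have [S'' [TS'' S''S' not_S''a]] := memory_set_avoid a0 phiM TS' not_min.
  exists S''; split=> [||g [<- | lg] S''g] //; first by move=> g /S''S'/S'S.
  by apply: S'K => //; apply: S''S'.
have [[l finS] _] := TS.
have [S' [TS' S'S S'K]] := shrink l.
by exists S'; split=> // g S'g; apply: S'K (finS _ (S'S _ S'g)) S'g.
Qed.

Lemma shift_equivariant {psi} {T : config -> config} g (x : config) :
  is_endo grp psi -> equivariant psi T -> shift g (T x) = T (shift (psi g) x).
Proof.
move=> psiM Teq; apply: functional_extensionality => k.
by rewrite /shift Teq (Teq _ k) shiftM -psiM invM invK.
Qed.

Definition image_mul (psi : G -> G) (S1 S2 : G -> Prop) : G -> Prop :=
  fun g => exists s1 s2, [/\ S1 s1, S2 s2 & g = psi s1 * s2].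

Lemma finite_image_mul psi S1 S2 :
  finite_set S1 -> finite_set S2 -> finite_set (image_mul psi S1 S2).
Proof.
case=> [l1 fin1] [l2 fin2].
exists (flat_map (fun a => map (fun b => psi a * b) l2) l1).
move=> _ [s1 [s2 [S1s1 S2s2 ->]]]; apply/in_flat_map; exists s1.
by split; [apply: fin1 | apply/in_map/fin2].
Qed.

Lemma memory_set_comp (a0 : A) {phi psi} {T1 T2 : config -> config} {S1 S2} :
  is_endo grp phi -> phi_memory_set grp phi T1 S1 ->
  is_endo grp psi -> phi_memory_set grp psi T2 S2 ->
  phi_memory_set grp (fun g => psi (phi g)) (fun x => T1 (T2 x))
    (image_mul psi S1 S2).
Proof.
move=> phiM /(phi_memory_setP a0 phiM) [fin1 T1eq T1loc].
move=> psiM /(phi_memory_setP a0 psiM) [fin2 T2eq T2loc].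
apply/(phi_memory_setP a0 (endo_comp phiM psiM)); split.
- exact: finite_image_mul.
- by move=> x h; rewrite T1eq (shift_equivariant _ _ psiM T2eq).
- move=> x y xy; apply: T1loc => s S1s; rewrite (T2eq x) (T2eq y).
  apply: T2loc => t S2t; rewrite /shift (endoV psiM) invK.
  by apply: xy; exists s, t.
Qed.

Lemma GCA_K_singleton {K : G -> Prop} {phi} {T : config -> config} {c} :
  is_endo grp phi -> phi_memory_set grp phi T (fun g => g = c) -> K c ->
  GCA_K grp K T.
Proof.
move=> phiM Tc Kc; split.
  by exists phi; split=> //; exists (fun g => g = c).
by move=> g min_g; rewrite (min_g (fun g => g = c)) //; exists phi.
Qed.

Lemma finite_singleton (c : G) : finite_set (fun g => g = c).
Proof. by exists (c :: nil) => g ->; left. Qed.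

Lemma memory_set_pullback (a0 : A) {phi} : is_endo grp phi ->
  phi_memory_set grp phi (fun (x : config) h => x (phi h)) (fun g => g = one).
Proof.
move=> phiM; apply/(phi_memory_setP a0 phiM); split.
- exact: finite_singleton.
- by move=> x h; rewrite /shift endoV // invK endo1 // gmulg1.
- by move=> x y xy; rewrite endo1 //; apply: xy.
Qed.

Lemma memory_set_translation (a0 : A) k :
  phi_memory_set grp (fun g => g) (fun (x : config) h => x (h * k))
    (fun g => g = k).
Proof.
apply/(phi_memory_setP a0 endo_id); split.
- exact: finite_singleton.
- by move=> x h; rewrite /shift invK gmul1g.
- by move=> x y xy; rewrite gmul1g; apply: xy.
Qed.

Lemma min_memory_set_sensitive {T : config -> config} {c : G} (x y : config) :
  (forall g, g <> c -> x g = y g) -> T x one <> T y one ->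
  min_memory_set grp T c.
Proof.
move=> xy Txy S [chi [chiM TS]]; apply: NNPP => not_Sc.
have [_ _ Tloc] := (phi_memory_setP (x c) chiM).1 TS.
by apply: Txy; apply: Tloc => s Ss; apply: xy => sc; apply: not_Sc; rewrite -sc.
Qed.

End MemorySets.

Theorem proposition2p8 (G : Type) (grp : group_on G) (A : finType)
    (hA : 1 < #|A|) (K : G -> Prop) (hK : @is_subgroup G grp K) :
  @is_GCA_submonoid G grp A (@GCA_K G grp A K) <-> @fully_invariant G grp K.
Proof.
have [a [b [_ _ /eqP a_neq_b]]] := card_gt1P hA.
case: hK => [K1 [KM _]]; split.
  (* The composite x |-> x(phi(_ * k)) reads the coordinate phi k at 1. *)
  move=> [_ [_ compK]] phi phiM k Kk.
  have pullK := GCA_K_singleton phiM (memory_set_pullback a phiM) K1.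
  have transK :=
    GCA_K_singleton endo_id (memory_set_translation (grp := grp) a k) Kk.
  have [_ minK] := compK _ _ transK pullK; apply: minK.
  pose x (g : G) := if excluded_middle_informative (g = phi k) then b else a.
  apply: (min_memory_set_sensitive (fun _ => a) x).
    by move=> g; rewrite /x; case: excluded_middle_informative.
  by rewrite /= gmul1g /x; case: excluded_middle_informative.
(* The identity is the pullback along the identity endomorphism; composites
   have the memory set psi(S1) S2, contained in K by full invariance. *)
move=> FI; split; [by move=> T [] | split].
  exact: GCA_K_singleton endo_id (memory_set_pullback a endo_id) K1.
move=> T1 T2 [T1gca min1K] [T2gca min2K].
have [phi [S1 [phiM TS1 S1K]]] := memory_set_within a T1gca min1K.
have [psi [S2 [psiM TS2 S2K]]] := memory_set_within a T2gca min2K.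
have TS := memory_set_comp a phiM TS1 psiM TS2.
have pphiM := endo_comp phiM psiM.
split; first by exists (fun g => psi (phi g)); split=> //; eexists; exact: TS.
move=> g /(_ _ (ex_intro _ _ (conj pphiM TS))) [s1 [s2 [S1s1 S2s2 ->]]].
by apply: KM; [apply: FI psiM _ (S1K _ S1s1) | apply: S2K].
Qed.
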